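(* Let $\Phi$ be the flow of the vector field $F$ on $T_1\Delta$ defined in the context. Then $\Phi_t(\Delta)\subset\Delta$ for all $t\ge0$, and for each $I\subseteq E$, for all $v\in\Delta_I$ and all $t\in\mathbb R$, $\Phi_t(v)\in\Delta$ if and only if $\Phi_t(v)\in\Delta_I$.
   Context: Let $N\ge2$, $E=\{1,\dots,N\}$, $\alpha>1$, and let $A=(A_{i,j})_{i,j\le N}$ be a symmetric matrix with nonnegative entries, $A_{i,j}>0$ for $i\ne j$, and $\sum_j A_{i,j}$ independent of $i$. Let $\Delta=\{v\in\mathbb R_+^N:\ \sum_i v_i=1,\ v_i\le 3/4 \text{ whenever } A_{i,i}=0\}$. For $v\in\Delta$ let $v^\alpha=(v_1^\alpha,\dots,v_N^\alpha)$, $H(v)=\langle Av^\alpha,v^\alpha\rangle=\sum_{i,j}A_{i,j}v_i^\alpha v_j^\alpha$ (which is positive on $\Delta$) and $\pi_i(v)=v_i^\alpha(Av^\alpha)_i/H(v)$. For $r=0,1$ let $T_r\Delta=\{v\in\mathbb R^N:\sum_iv_i=r\}$, let $\imath:T_1\Delta\to\Delta$ be the nearest-point projection $\imath(v)=\mathrm{argmin}\{\|y-v\|:y\in\Delta\}$, and let $F:T_1\Delta\to T_0\Delta$, $F(v)=-v+\pi(\imath(v))$; $F$ is Lipschitz and $\Phi:\mathbb R\times T_1\Delta\to T_1\Delta$ denotes its flow. For $I\subseteq E$, $\Delta_I=\{v\in\Delta: v_i=0\ \forall i\in E\setminus I\}$. *)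

From mathcomp Require Import all_boot all_order all_algebra.
From mathcomp Require Import all_classical all_reals all_analysis.
Set Implicit Arguments. Unset Strict Implicit. Unset Printing Implicit Defensive.
Import Order.TTheory GRing.Theory Num.Theory.
Local Open Scope ring_scope.

Definition inDelta (R : realType) (N : nat) (A : 'M[R]_N) (v : 'I_N -> R) : Prop :=
  (forall i, 0 <= v i) /\ (\sum_i v i = 1) /\ (forall i, A i i = 0 -> v i <= 3 / 4).

Definition inDeltaI (R : realType) (N : nat) (A : 'M[R]_N) (I : {set 'I_N})
  (v : 'I_N -> R) : Prop :=
  inDelta A v /\ (forall i, i \notin I -> v i = 0).

Definition vpow (R : realType) (N : nat) (alpha : R) (v : 'I_N -> R) : 'I_N -> R :=
  fun i => v i `^ alpha.

Definition Hfun (R : realType) (N : nat) (A : 'M[R]_N) (alpha : R) (v : 'I_N -> R) : R :=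
  \sum_i \sum_j A i j * vpow alpha v i * vpow alpha v j.

Definition pifun (R : realType) (N : nat) (A : 'M[R]_N) (alpha : R) (v : 'I_N -> R)
  : 'I_N -> R :=
  fun i => vpow alpha v i * (\sum_j A i j * vpow alpha v j) / Hfun A alpha v.

Definition edist (R : realType) (N : nat) (v w : 'I_N -> R) : R :=
  Num.sqrt (\sum_i (v i - w i) ^+ 2).

Definition is_nearest_proj (R : realType) (N : nat) (A : 'M[R]_N)
  (iota : ('I_N -> R) -> ('I_N -> R)) : Prop :=
  forall v, \sum_i v i = 1 ->
    inDelta A (iota v) /\
    (forall y, inDelta A y -> edist (iota v) v <= edist y v).

Definition Fvec (R : realType) (N : nat) (A : 'M[R]_N) (alpha : R)
  (iota : ('I_N -> R) -> ('I_N -> R)) (v : 'I_N -> R) : 'I_N -> R :=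
  fun i => - v i + pifun A alpha (iota v) i.

Definition is_flow (R : realType) (N : nat) (A : 'M[R]_N) (alpha : R)
  (iota : ('I_N -> R) -> ('I_N -> R)) (Phi : R -> ('I_N -> R) -> ('I_N -> R)) : Prop :=
  forall v, \sum_i v i = 1 ->
    Phi 0 v = v /\
    forall t : R, (\sum_i Phi t v i = 1) /\
      forall i, is_derive t 1 (fun s => Phi s v i) (Fvec A alpha iota (Phi t v) i).

From Pilot Require Import Defs.
From mathcomp Require Import all_boot all_order all_algebra.
From mathcomp Require Import all_classical all_reals all_analysis.
From mathcomp Require Import ring lra.
Set Implicit Arguments. Unset Strict Implicit. Unset Printing Implicit Defensive.
Import Order.TTheory GRing.Theory Num.Theory.
Local Open Scope ring_scope.

(* Along a trajectory every coordinate solves x_i' = - x_i + pi_i(iota x), a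
   linear equation perturbed by a bounded term, so it can be compared with
   exponentials (Gronwall).  Since pi_i >= 0, and pi_i <= 1/2 when A_ii = 0,
   the constraints x_i >= 0 and x_i <= 3/4 propagate forward in time.  For a
   face, let v_i = 0.  Backward in time x_i' >= - x_i gives x_i(t) <= 0 for
   t <= 0.  Forward in time the trajectory stays in Delta, where iota is the
   identity and pi_i(x) <= K x_i: the denominator H is bounded away from 0 on
   Delta and x_i^alpha <= x_i.  Hence x_i' <= (K - 1) x_i, and again
   x_i(t) <= 0.  So whenever Phi_t(v) lies in Delta its i-th coordinate is 0. *)

Lemma ler_sum_term (R : numDomainType) (I : finType) (F : I -> R) j :
  (forall i, 0 <= F i) -> F j <= \sum_i F i.
Proof. by move=> F0; rewrite (bigD1 j) //= lerDl sumr_ge0. Qed.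

Lemma exists_ge_mean (R : realFieldType) (I : finType) (P : pred I)
    (x : I -> R) (s : R) :
  0 < s -> s <= \sum_(i | P i) x i -> exists2 i, P i & s <= #|P|%:R * x i.
Proof.
move=> s_gt0 s_le; case: (pickP P) => [i0 Pi0|P0]; last first.
  by move: s_le; rewrite big_pred0 // => /(lt_le_trans s_gt0); rewrite ltxx.
case: (arg_maxP x Pi0) => i Pi x_le; exists i => //.
apply: le_trans s_le (le_trans (ler_sum _ x_le) _).
by rewrite sumr_const mulr_natl.
Qed.

Lemma pos_values_lower_bound (R : realFieldType) (I : finType) (F : I -> R) :
  exists2 m, 0 < m & forall i, 0 < F i -> m <= F i.
Proof.
have S_ge0 : 0 <= \sum_i `|F i|^-1 by apply: sumr_ge0 => i _; rewrite invr_ge0.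
exists (1 + \sum_i `|F i|^-1)^-1; first by rewrite invr_gt0 ltr_pwDl.
move=> i Fi_gt0; rewrite -[F i]invrK lef_pV2 ?posrE ?invr_gt0 ?ltr_pwDl //.
rewrite -[F i]gtr0_norm // ler_wpDl //.
by apply: ler_sum_term => j; rewrite invr_ge0.
Qed.

Lemma powR_le_self (R : realType) (x a : R) :
  0 <= x <= 1 -> 1 <= a -> x `^ a <= x.
Proof.
move=> /andP[x_ge0 x_le1] a_ge1; have [->|x_neq0] := eqVneq x 0.
  by rewrite powR0 // gt_eqF // (lt_le_trans ltr01).
by apply: ge1r_powR => //; rewrite lt_neqAle eq_sym x_neq0 x_ge0.
Qed.

Lemma gronwall_lower (R : realType) (f g : R -> R) (k a b : R) :
  (forall s : R, is_derive s 1 f (g s)) -> a <= b ->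
  (forall s, a <= s <= b -> k * f s <= g s) ->
  expR (- k * a) * f a <= expR (- k * b) * f b.
Proof.
move=> df ab hg; pose h (s : R) := expR (- k * s) * f s.
have dh (s : R) : is_derive s 1 h (expR (- k * s) * (g s - k * f s)).
  have dl : is_derive s 1 (fun s : R => - k * s) (- k).
    by have := is_deriveZ (- k) (is_derive_id s 1); rewrite /GRing.scale /= mulr1.
  have de : is_derive s 1 (expR \o (fun s : R => - k * s)) (expR (- k * s) * - k).
    exact: is_derive1_comp.
  apply: is_derive_eq (is_deriveM de (df s)) _.
  by rewrite /GRing.scale /=; ring.
apply: (@ger0_derive1_ndecr R h a b) => //.
- move=> s; rewrite in_itv /= => /andP[a_s s_b].
  rewrite derive1E (@derive_val _ _ _ _ _ _ _ (dh s)) mulr_ge0 ?expR_ge0 // subr_ge0.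
  by rewrite hg // !ltW.
- by apply: derivable_within_continuous => s _; case: (dh s).
Qed.

Lemma gronwall_ge0 (R : realType) (f g : R -> R) (k a b : R) :
  (forall s : R, is_derive s 1 f (g s)) -> a <= b ->
  (forall s, a <= s <= b -> k * f s <= g s) -> 0 <= f a -> 0 <= f b.
Proof.
move=> df ab hg fa_ge0; rewrite -(pmulr_rge0 _ (expR_gt0 (- k * b))).
apply: le_trans _ (gronwall_lower df ab hg).
by rewrite mulr_ge0 ?expR_ge0.
Qed.

Lemma gronwall_le0 (R : realType) (f g : R -> R) (k a b : R) :
  (forall s : R, is_derive s 1 f (g s)) -> a <= b ->
  (forall s, a <= s <= b -> k * f s <= g s) -> f b <= 0 -> f a <= 0.
Proof.
move=> df ab hg fb_le0; rewrite -(pmulr_rle0 _ (expR_gt0 (- k * a))).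
apply: le_trans (gronwall_lower df ab hg) _.
by rewrite mulr_ge0_le0 ?expR_ge0.
Qed.

Section Simplex.
Variables (R : realType) (N : nat) (A : 'M[R]_N) (alpha : R).
Hypothesis A_ge0 : forall i j, 0 <= A i j.

Lemma inDelta_le1 x i : inDelta A x -> x i <= 1.
Proof. by move=> [x_ge0 [<- _]]; exact: ler_sum_term. Qed.

Lemma vpow_ge0 (x : 'I_N -> R) i : 0 <= vpow alpha x i.
Proof. exact: powR_ge0. Qed.

Lemma Hfun_ge_term x j k :
  A j k * vpow alpha x j * vpow alpha x k <= Hfun A alpha x.
Proof.
have term_ge0 a b : 0 <= A a b * vpow alpha x a * vpow alpha x b.
  by rewrite !mulr_ge0 ?vpow_ge0.
apply: le_trans (ler_sum_term (F := fun b => A j b * vpow alpha x j * vpow alpha x b) k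
  (term_ge0 j)) _.
apply: (ler_sum_term (F := fun a => \sum_b A a b * vpow alpha x a * vpow alpha x b) j).
by move=> a; apply: sumr_ge0 => b _.
Qed.

Lemma Hfun_ge0 x : 0 <= Hfun A alpha x.
Proof.
by apply: sumr_ge0 => i _; apply: sumr_ge0 => j _; rewrite !mulr_ge0 ?vpow_ge0.
Qed.

Lemma pifun_ge0 x i : 0 <= pifun A alpha x i.
Proof.
rewrite divr_ge0 ?Hfun_ge0 // mulr_ge0 ?vpow_ge0 // sumr_ge0 // => j _.
by rewrite mulr_ge0 ?vpow_ge0.
Qed.

(* Row i and column i of the quadratic form each contribute [pifun x i * H x]
   to [H x], and they overlap only in the entry [A i i = 0]. *)
Lemma pifun_le_half x i : A^T = A -> A i i = 0 -> pifun A alpha x i <= 1 / 2.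
Proof.
move=> A_sym Aii0; set p := vpow alpha x.
have A_symE a b : A a b = A b a by rewrite -[in LHS]A_sym mxE.
set X := p i * \sum_j A i j * p j.
have twoX_le : 2 * X <= Hfun A alpha x.
  rewrite /Hfun (bigD1 i) //=.
  have -> : \sum_j A i j * p i * p j = X.
    by rewrite /X mulr_sumr; apply: eq_bigr => j _; ring.
  rewrite mulr2n mulrDl mul1r lerD2l.
  apply: le_trans (ler_sum _ (fun k _ =>
    ler_sum_term (F := fun j => A k j * p k * p j) i _)).
    rewrite /X mulr_sumr (bigD1 i) //= Aii0 mul0r mulr0 add0r.
    by rewrite le_eqVlt (eq_bigr (fun k => A k i * p k * p i)) ?eqxx // => k _;
      rewrite A_symE; ring.
  by move=> k _ j; rewrite !mulr_ge0 ?vpow_ge0.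
have [H0|H_neq0] := eqVneq (Hfun A alpha x) 0; first by rewrite /pifun H0 invr0 mulr0.
have H_gt0 : 0 < Hfun A alpha x by rewrite lt_neqAle eq_sym H_neq0 Hfun_ge0.
by rewrite /pifun -/p -/X ler_pdivrMr //; lra.
Qed.

Hypothesis A_offdiag_gt0 : forall i j, i != j -> 0 < A i j.

(* This is where the bound [x i <= 3/4] on zero-diagonal coordinates enters. *)
Lemma inDelta_large_pair x : inDelta A x ->
  exists j k, [/\ 0 < A j k, (4 * N%:R)^-1 <= x j & (4 * N%:R)^-1 <= x k].
Proof.
move=> [x_ge0 [x_sum1 x_le34]].
have sum_ge1 : 1 <= \sum_i x i by rewrite x_sum1.
have [m _] := exists_ge_mean (P := xpredT) ltr01 sum_ge1.
rewrite cardT size_enum_ord => xm.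
have N_gt0 : 0 < N%:R :> R by rewrite ltr0n (leq_ltn_trans _ (ltn_ord m)).
have large (y : R) : 0 <= y -> 1 / 4 <= N%:R * y -> (4 * N%:R)^-1 <= y.
  have NN_gt0 : 0 < 4 * N%:R :> R by rewrite mulr_gt0.
  by move=> y_ge0 Ny; rewrite -(ler_pM2l NN_gt0) mulfV ?gt_eqF //; nra.
have xm_large : (4 * N%:R)^-1 <= x m by apply: large; rewrite ?x_ge0 //; lra.
have [Amm_gt0|Amm_le0] := ltrP 0 (A m m); first by exists m, m.
have Amm0 : A m m = 0 by apply/eqP; rewrite eq_le Amm_le0 A_ge0.
have rest_ge : 1 / 4 <= \sum_(k | k != m) x k.
  have := x_le34 m Amm0.
  by move: x_sum1; rewrite (bigD1 m) //=; lra.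
have quarter_gt0 : 0 < 1 / 4 :> R by rewrite divr_gt0.
have [k k_neq_m] := exists_ge_mean (P := predC1 m) quarter_gt0 rest_ge.
rewrite cardC1 card_ord => xk.
exists m, k; split => //; first by rewrite A_offdiag_gt0 // eq_sym.
apply: large; rewrite ?x_ge0 //; apply: le_trans xk _.
by rewrite ler_wpM2r ?x_ge0 // ler_nat leq_pred.
Qed.

Lemma Hfun_lower_bound : (0 < N)%N -> 0 <= alpha ->
  exists2 h, 0 < h & forall x, inDelta A x -> h <= Hfun A alpha x.
Proof.
move=> N_gt0 alpha_ge0.
have [m m_gt0 m_le] := pos_values_lower_bound (fun p : 'I_N * 'I_N => A p.1 p.2).
set c := (4 * N%:R)^-1 `^ alpha.
have c_gt0 : 0 < c by rewrite powR_gt0 // invr_gt0 mulr_gt0 // ltr0n.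
have c_le (y : R) : (4 * N%:R)^-1 <= y -> c <= y `^ alpha.
  move=> y_large; apply: ge0_ler_powR => //; rewrite nnegrE.
    by rewrite invr_ge0 mulr_ge0 // ler0n.
  by apply: le_trans y_large; rewrite invr_ge0 mulr_ge0 // ler0n.
exists (m * c * c) => [|x Dx]; first by rewrite !mulr_gt0.
have [j [k [Ajk_gt0 xj_large xk_large]]] := inDelta_large_pair Dx.
apply: le_trans (Hfun_ge_term x j k).
have [m_ge0 c_ge0] := (ltW m_gt0, ltW c_gt0).
rewrite /vpow; apply: ler_pM; rewrite ?mulr_ge0 ?c_le //.
by apply: ler_pM; rewrite ?c_le // (m_le (j, k)).
Qed.

Lemma pifun_le_mul : (0 < N)%N -> 1 <= alpha ->
  forall i, exists K, forall x, inDelta A x -> pifun A alpha x i <= K * x i.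
Proof.
move=> N_gt0 alpha_ge1 i.
have [h h_gt0 h_le] := Hfun_lower_bound N_gt0 (le_trans ler01 alpha_ge1).
exists ((\sum_j A i j) / h) => x Dx.
have vpow_le j : vpow alpha x j <= x j.
  by apply: powR_le_self => //; rewrite Dx.1 inDelta_le1.
have H_gt0 := lt_le_trans h_gt0 (h_le x Dx).
have sum_ge0 : 0 <= \sum_j A i j * vpow alpha x j.
  by apply: sumr_ge0 => j _; rewrite mulr_ge0 ?vpow_ge0.
rewrite /pifun [leRHS]mulrC [leRHS]mulrA.
apply: ler_pM; rewrite ?mulr_ge0 ?invr_ge0 ?vpow_ge0 ?Hfun_ge0 //.
  apply: ler_pM; rewrite ?vpow_ge0 //.
  apply: ler_sum => j _; rewrite ler_piMr //.
  exact: le_trans (vpow_le j) (inDelta_le1 j Dx).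
by rewrite lef_pV2 ?posrE ?h_le.
Qed.

End Simplex.

Lemma edist_ge0 (R : realType) (N : nat) (v w : 'I_N -> R) : 0 <= Defs.edist v w.
Proof. exact: sqrtr_ge0. Qed.

Lemma edistxx (R : realType) (N : nat) (v : 'I_N -> R) : Defs.edist v v = 0.
Proof. by rewrite /Defs.edist big1 ?sqrtr0 // => i _; rewrite subrr expr0n. Qed.

Lemma edist_eq0 (R : realType) (N : nat) (v w : 'I_N -> R) :
  Defs.edist v w = 0 -> v = w.
Proof.
have sq_ge0 j : 0 <= (v j - w j) ^+ 2 by exact: sqr_ge0.
rewrite /Defs.edist => /eqP; rewrite sqrtr_eq0 => sum_le0.
have sum0 : \sum_i (v i - w i) ^+ 2 = 0.
  by apply/eqP; rewrite eq_le sum_le0 sumr_ge0.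
apply/funext => i; apply/eqP; rewrite -subr_eq0 -sqrf_eq0; apply/eqP.
exact: psumr_eq0P (fun j _ => sq_ge0 j) sum0 i isT.
Qed.

Lemma nearest_proj_id (R : realType) (N : nat) (A : 'M[R]_N) iota v :
  is_nearest_proj A iota -> inDelta A v -> iota v = v.
Proof.
move=> proj Dv; have [_ nearest] := proj v Dv.2.1.
by apply/edist_eq0/eqP; rewrite eq_le edist_ge0 andbT -(edistxx v) nearest.
Qed.

Section Flow.
Variables (R : realType) (N : nat) (alpha : R) (A : 'M[R]_N).
Variables (iota : ('I_N -> R) -> ('I_N -> R)) (Phi : R -> ('I_N -> R) -> ('I_N -> R)).
Hypotheses (A_sym : A^T = A) (A_ge0 : forall i j, 0 <= A i j).
Hypothesis flow : is_flow A alpha iota Phi.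

Lemma flow_coord_derive (v : 'I_N -> R) (i : 'I_N) (c e : R) :
  \sum_j v j = 1 -> forall s : R,
  is_derive s 1 (fun s => c + e * Phi s v i) (e * Fvec A alpha iota (Phi s v) i).
Proof.
move=> v1 s; have [_ /(_ s) [_ dPhi]] := flow v1.
apply: is_derive_eq (is_deriveD (is_derive_cst c s 1) (is_deriveZ e (dPhi i))) _.
by rewrite /GRing.scale /= add0r.
Qed.

Lemma flow_inDelta_mono (v : 'I_N -> R) (a b : R) :
  \sum_i v i = 1 -> a <= b -> inDelta A (Phi a v) -> inDelta A (Phi b v).
Proof.
move=> v1 ab [xa_ge0 [_ xa_le34]]; have [_ /(_ b) [xb_sum1 _]] := flow v1.
split; [|split] => // i.
- suff : 0 <= 0 + 1 * Phi b v i by rewrite add0r mul1r.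
  apply: (gronwall_ge0 (k := -1) (flow_coord_derive i 0 1 v1) ab).
    move=> s _; have := @pifun_ge0 _ _ A alpha A_ge0 (iota (Phi s v)) i.
    by rewrite /Fvec; lra.
  by have := xa_ge0 i; lra.
- move=> Aii0; suff : 0 <= 3 / 4 + -1 * Phi b v i by lra.
  apply: (gronwall_ge0 (k := -1) (flow_coord_derive i (3 / 4) (-1) v1) ab).
    move=> s _; have := @pifun_le_half _ _ A alpha A_ge0 (iota (Phi s v)) i A_sym Aii0.
    by rewrite /Fvec; lra.
  by have := xa_le34 i Aii0; lra.
Qed.

Lemma flow_face_backward (v : 'I_N -> R) (i : 'I_N) (t : R) :
  \sum_j v j = 1 -> v i = 0 -> t <= 0 -> Phi t v i <= 0.
Proof.
move=> v1 vi0 t_le0; suff : 0 + 1 * Phi t v i <= 0 by rewrite add0r mul1r.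
apply: (gronwall_le0 (k := -1) (flow_coord_derive i 0 1 v1) t_le0).
  move=> s _; have := @pifun_ge0 _ _ A alpha A_ge0 (iota (Phi s v)) i.
  by rewrite /Fvec; lra.
have [-> _] := flow v1; rewrite vi0; lra.
Qed.

Hypotheses (N_gt0 : (0 < N)%N) (alpha_gt1 : 1 < alpha).
Hypothesis A_offdiag_gt0 : forall i j, i != j -> 0 < A i j.
Hypothesis proj : is_nearest_proj A iota.

Lemma flow_face_forward (v : 'I_N -> R) (i : 'I_N) (t : R) :
  inDelta A v -> v i = 0 -> 0 <= t -> Phi t v i <= 0.
Proof.
move=> Dv vi0 t_ge0; have v1 := Dv.2.1; have [Phi0 _] := flow v1.
have [K pi_le] := @pifun_le_mul _ _ A alpha A_ge0 A_offdiag_gt0 N_gt0 (ltW alpha_gt1) i.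
suff : 0 <= 0 + -1 * Phi t v i by lra.
apply: (gronwall_ge0 (k := K - 1) (flow_coord_derive i 0 (-1) v1) t_ge0).
  move=> s /andP[s_ge0 _].
  have Ds : inDelta A (Phi s v) by apply: flow_inDelta_mono v1 s_ge0 _; rewrite Phi0.
  have := pi_le (Phi s v) Ds; rewrite /Fvec (nearest_proj_id proj Ds); nra.
by rewrite Phi0 vi0; lra.
Qed.

End Flow.

Theorem lemma3p1 (R : realType) (N : nat) (alpha : R) (A : 'M[R]_N)
  (iota : ('I_N -> R) -> ('I_N -> R)) (Phi : R -> ('I_N -> R) -> ('I_N -> R)) :
  (2 <= N)%N -> 1 < alpha ->
  A^T = A ->
  (forall i j, 0 <= A i j) ->
  (forall i j, i != j -> 0 < A i j) ->
  (forall i k, \sum_j A i j = \sum_j A k j) ->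
  is_nearest_proj A iota ->
  is_flow A alpha iota Phi ->
  (forall (t : R) v, 0 <= t -> inDelta A v -> inDelta A (Phi t v)) /\
  (forall (I : {set 'I_N}) v (t : R), inDeltaI A I v ->
     (inDelta A (Phi t v) <-> inDeltaI A I (Phi t v))).
Proof.
move=> N_ge2 alpha_gt1 A_sym A_ge0 A_offdiag_gt0 _ proj flow.
have N_gt0 : (0 < N)%N by apply: leq_trans N_ge2.
have flow0 v : inDelta A v -> Phi 0 v = v by move=> Dv; have [] := flow v Dv.2.1.
split=> [t v t_ge0 Dv | I v t [Dv v_face]].
  by apply: (flow_inDelta_mono A_sym A_ge0 flow Dv.2.1 t_ge0); rewrite flow0.
split=> [Dt|[]//]; split=> // i i_notin_I; have vi0 := v_face i i_notin_I.
have Phi_le0 : Phi t v i <= 0.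
  have [t_ge0|t_lt0] := lerP 0 t.
    exact (flow_face_forward A_sym A_ge0 flow N_gt0 alpha_gt1 A_offdiag_gt0 proj
             Dv vi0 t_ge0).
  exact (flow_face_backward A_ge0 flow Dv.2.1 vi0 (ltW t_lt0)).
by apply/eqP; rewrite eq_le Phi_le0 (Dt.1 i).
Qed.
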